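(* Let $a,b$ be distinct real numbers, let $x_0\in\mathbb{R}$, and set $\lambda_n:=\frac{2n+3}{n+2}$ for all $n\in\mathbb{N}$ (so $\lambda_n\to2$ and $\sum_n(2-\lambda_n)=+\infty$). Define $(x_n)_{n\in\mathbb{N}}$ by \[ x_{2n+1}:=(1-\lambda_{2n})x_{2n}+\lambda_{2n}a,\qquad x_{2n+2}:=(1-\lambda_{2n+1})x_{2n+1}+\lambda_{2n+1}b . \] Then $x_{2n}\to \operatorname{sign}(b-a)\,\infty$ and $x_{2n+1}\to\operatorname{sign}(a-b)\,\infty$. *)

From Stdlib Require Import Reals.
From Coquelicot Require Import Coquelicot.
Open Scope R_scope.

Definition lam (n : nat) : R := (2 * INR n + 3) / (INR n + 2).

Fixpoint xseq (a b x0 : R) (n : nat) : R :=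
  match n with
  | O => x0
  | S m => (1 - lam m) * xseq a b x0 m
           + lam m * (if Nat.even m then a else b)
  end.

(* Since 1 - lam n = -(n+1)/(n+2), the weighted iterates y_n := (n+1) x_n
   satisfy y_(n+1) = - y_n + (2n+3) c_n, with c_n alternately a and b.  Two
   steps give y_(2k+2) = y_(2k) + (4k+5) b - (4k+3) a, so y_(2k) is the
   quadratic x0 + (b-a)(2k^2+k) + 2bk and y_(2k+1) = (4k+3) a - y_(2k).
   Dividing by the linear weights, the even and odd iterates diverge linearly
   with opposite signs.  The case b < a reduces to a < b because the sequence
   is odd in (a, b, x0). *)
From Stdlib Require Import Reals Lra Lia.
From Coquelicot Require Import Coquelicot.
Open Scope R_scope.

Lemma xseq_weighted_step a b x0 n :
  (INR n + 2) * xseq a b x0 (S n) =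
  - ((INR n + 1) * xseq a b x0 n)
  + (2 * INR n + 3) * (if Nat.even n then a else b).
Proof.
  cbn [xseq]; unfold lam.
  pose proof (pos_INR n).
  field; lra.
Qed.

Lemma INR_double k : INR (2 * k) = 2 * INR k.
Proof. rewrite mult_INR; simpl; ring. Qed.

Lemma xseq_odd_weighted a b x0 k :
  (2 * INR k + 2) * xseq a b x0 (2 * k + 1) =
  (4 * INR k + 3) * a - (2 * INR k + 1) * xseq a b x0 (2 * k).
Proof.
  replace (2 * k + 1)%nat with (S (2 * k)) by lia.
  pose proof (xseq_weighted_step a b x0 (2 * k)) as Hstep.
  rewrite Nat.even_mul, INR_double in Hstep; simpl orb in Hstep; cbn iota in Hstep.
  rewrite Hstep; ring.
Qed.

Lemma xseq_even_weighted a b x0 k :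
  (2 * INR k + 1) * xseq a b x0 (2 * k) =
  x0 + (b - a) * (2 * INR k * INR k + INR k) + 2 * b * INR k.
Proof.
  induction k as [|k IH].
  - simpl; ring.
  - replace (2 * S k)%nat with (S (2 * k + 1)) by lia.
    pose proof (xseq_weighted_step a b x0 (2 * k + 1)) as Hstep.
    replace (Nat.even (2 * k + 1)) with false in Hstep
      by (rewrite Nat.even_add, Nat.even_mul; reflexivity).
    rewrite plus_INR, INR_double in Hstep; simpl (INR 1) in Hstep.
    rewrite S_INR.
    replace (2 * (INR k + 1) + 1) with (2 * INR k + 1 + 2) by ring.
    rewrite Hstep.
    replace (2 * INR k + 1 + 1) with (2 * INR k + 2) by ring.
    rewrite xseq_odd_weighted, IH; ring.
Qed.

Lemma xseq_opp a b x0 n : xseq (- a) (- b) (- x0) n = - xseq a b x0 n.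
Proof.
  induction n as [|n IH]; cbn [xseq]; [reflexivity|].
  rewrite IH; destruct (Nat.even n); ring.
Qed.

Lemma is_lim_seq_affine_INR (c d : R) :
  0 < c -> is_lim_seq (fun k => c * INR k + d) p_infty.
Proof.
  intros Hc.
  apply (is_lim_seq_plus _ _ p_infty d); [|apply is_lim_seq_const|reflexivity].
  rewrite <- (is_Rbar_mult_unique c p_infty p_infty)
    by (apply is_Rbar_mult_sym, is_Rbar_mult_p_infty_pos; exact Hc).
  apply is_lim_seq_scal_l, is_lim_seq_INR.
Qed.

(* A quadratic divided by a linear polynomial, both with positive leading
   coefficient, is the affine function (ga/al) k + p plus a vanishing
   remainder q / (al k + be). *)
Lemma is_lim_seq_quadratic_over_linear (al be ga e f : R) (u : nat -> R) :
  0 < al -> 0 < be -> 0 < ga ->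
  (forall k, (al * INR k + be) * u k = ga * INR k * INR k + e * INR k + f) ->
  is_lim_seq u p_infty.
Proof.
  intros Hal Hbe Hga Hu.
  set (p := (e * al - ga * be) / (al * al)).
  set (q := f - be * p).
  assert (Hdecomp : forall k, ga / al * INR k + p + q / (al * INR k + be) = u k).
  { intros k.
    assert (Hden : 0 < al * INR k + be)
      by (pose proof (pos_INR k); nra).
    apply (Rmult_eq_reg_l (al * INR k + be)); [|lra].
    rewrite Hu; unfold q, p; field; lra. }
  apply (is_lim_seq_ext _ _ _ Hdecomp).
  apply (is_lim_seq_plus _ _ p_infty 0); [| |reflexivity].
  - apply is_lim_seq_affine_INR, Rdiv_lt_0_compat; assumption.
  - apply (is_lim_seq_div _ _ q p_infty);
      [apply is_lim_seq_const | apply is_lim_seq_affine_INR; exact Hal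
      | discriminate | ].
    unfold is_Rbar_div, is_Rbar_mult; simpl; rewrite Rmult_0_r; reflexivity.
Qed.

Lemma xseq_limits_of_lt (a b x0 : R) :
  a < b ->
  is_lim_seq (fun n => xseq a b x0 (2 * n)) p_infty /\
  is_lim_seq (fun n => xseq a b x0 (2 * n + 1)) m_infty.
Proof.
  intros Hab; split.
  - apply (is_lim_seq_quadratic_over_linear 2 1 (2 * (b - a)) (3 * b - a) x0);
      try lra.
    intros k; rewrite xseq_even_weighted; ring.
  - apply is_lim_seq_opp.
    apply (is_lim_seq_quadratic_over_linear 2 2 (2 * (b - a)) (3 * b - 5 * a)
             (x0 - 3 * a)); try lra.
    intros k.
    rewrite Ropp_mult_distr_r_reverse, xseq_odd_weighted, xseq_even_weighted; ring.
Qed.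

Theorem mainTheorem5 (a b x0 : R) (hab : a <> b) :
  (a < b ->
     is_lim_seq (fun n => xseq a b x0 (2 * n)) p_infty /\
     is_lim_seq (fun n => xseq a b x0 (2 * n + 1)) m_infty) /\
  (b < a ->
     is_lim_seq (fun n => xseq a b x0 (2 * n)) m_infty /\
     is_lim_seq (fun n => xseq a b x0 (2 * n + 1)) p_infty).
Proof.
  (* [hab] is implied by either strict order, hence unused. *)
  split; [exact (xseq_limits_of_lt a b x0)|].
  intros Hba.
  assert (Hxseq : forall n, - xseq (- a) (- b) (- x0) n = xseq a b x0 n)
    by (intros n; rewrite xseq_opp; ring).
  destruct (xseq_limits_of_lt (- a) (- b) (- x0)) as [Heven Hodd]; [lra|].
  split.
  - apply (is_lim_seq_ext _ _ _ (fun n => Hxseq (2 * n)%nat)).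
    apply (is_lim_seq_opp _ p_infty); exact Heven.
  - apply (is_lim_seq_ext _ _ _ (fun n => Hxseq (2 * n + 1)%nat)).
    apply (is_lim_seq_opp _ m_infty); exact Hodd.
Qed.
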